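(* Let $n$ be a positive integer. Then, modulo $\Phi_n(q)^2$, \[ \sum_{k=0}^{n-1}\frac{(q;q^2)_k^2(q^2;q^4)_k}{(q^2;q^2)_k^2(q^4;q^4)_k}\,q^{2k} \equiv q^{(n-1)/2}\frac{(q^2;q^4)_{(n-1)/4}^2}{(q^4;q^4)_{(n-1)/4}^2}\quad\text{if } n\equiv 1\pmod 4, \] and \[ \sum_{k=0}^{n-1}\frac{(q;q^2)_k^2(q^2;q^4)_k}{(q^2;q^2)_k^2(q^4;q^4)_k}\,q^{2k}\equiv 0\quad\text{if } n\equiv 3\pmod 4. \]
   Context: For an indeterminate $a$ and a nonnegative integer $k$, $(a;q)_k=\prod_{j=0}^{k-1}(1-aq^j)$, with $(a;q)_0=1$. $\Phi_n(q)=\prod_{1\le j\le n,\ \gcd(j,n)=1}(q-e^{2\pi i j/n})$ is the $n$-th cyclotomic polynomial. A congruence between rational functions in $q$ modulo a polynomial $P(q)$ means that the difference, written as a ratio of polynomials with denominator coprime to $P(q)$, has numerator divisible by $P(q)$. *)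

From HB Require Import structures.
From mathcomp Require Import all_boot all_order all_algebra all_field.
Set Implicit Arguments. Unset Strict Implicit. Unset Printing Implicit Defensive.
Import Order.TTheory GRing.Theory Num.Theory.
Local Open Scope ring_scope.

Notation "x %:F" := (@FracField.tofrac _ x) : ring_scope.
Notation RF := {fraction {poly rat}}.

Definition qq : RF := ('X : {poly rat})%:F.

Definition qpoch (R : ringType) (a p : R) (k : nat) : R :=
  \prod_(j < k) (1 - a * p ^+ j).

Definition PhiQ (n : nat) : {poly rat} := map_poly intr ('Phi_n).

Definition qcong (f g : RF) (P : {poly rat}) : Prop :=
  exists A B : {poly rat},
    [/\ B != 0, coprimep B P, P %| A & f - g = A%:F / B%:F].

From HB Require Import structures.
From mathcomp Require Import all_boot all_order all_algebra all_field.
From mathcomp Require Import ring zify.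
Set Implicit Arguments. Unset Strict Implicit. Unset Printing Implicit Defensive.
Import Order.TTheory GRing.Theory Num.Theory.
Local Open Scope ring_scope.

(* Write p = q^2 and n = 2N + 1.  Modulo Phi_n(q)^2,
     (1 - q^(2j+1))^2 = (1 - q^(2j+1-n)) (1 - q^(2j+1+n)),
   since the difference is q^(2j+1) (1 - q^n)^2 / q^n, and for k < n the other
   factors of the summand have denominators coprime to Phi_n(q).  So the sum is
   congruent to the terminating q-Watson type sum
     S(N) = sum_k (p^-N;p)_k (p^(N+1);p)_k (p;p^2)_k / ((p;p)_k^2 (p^2;p^2)_k) p^k.
   Creative telescoping gives (1 - p^(N+2))^2 S(N+2) = p (1 - p^(N+1))^2 S(N),
   and S(0) = 1, S(1) = 0; hence S(N) = 0 for odd N and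
   S(N) = p^(N/2) (p;p^2)_(N/2)^2 / (p^2;p^2)_(N/2)^2 for even N.  Finally N is
   even exactly when n = 1 (mod 4). *)

Section QPochhammer.
Variable R : comNzRingType.
Implicit Types a p : R.

Lemma qpochS a p k : qpoch a p k.+1 = qpoch a p k * (1 - a * p ^+ k).
Proof. by rewrite /qpoch big_ord_recr. Qed.

Lemma qpochSl a p k : qpoch a p k.+1 = (1 - a) * qpoch (a * p) p k.
Proof.
rewrite /qpoch big_ord_recl mulr1; congr (_ * _).
by apply: eq_bigr => j _; rewrite exprS mulrA.
Qed.

Lemma qpoch_shift2 a p k :
  qpoch (a * p ^+ 2) p k * ((1 - a) * (1 - a * p)) =
  qpoch a p k * ((1 - a * p ^+ k) * (1 - a * p ^+ k.+1)).
Proof.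
transitivity (qpoch a p k.+2); last by rewrite !qpochS mulrA.
by rewrite !qpochSl -(mulrA a) -expr2; ring.
Qed.

End QPochhammer.

Section Watson.
Variables (K : fieldType) (p : K).
Hypothesis p_neq0 : p != 0.
Hypothesis p_not_root1 : forall j, (0 < j)%N -> p ^+ j != 1.

Lemma one_subX_neq0 j : (0 < j)%N -> 1 - p ^+ j != 0.
Proof. by move=> j_gt0; rewrite subr_eq0 eq_sym p_not_root1. Qed.

Lemma qpoch_neq0 (a q : K) k :
  (forall j, (j < k)%N -> 1 - a * q ^+ j != 0) -> qpoch a q k != 0.
Proof. by move=> nz; rewrite prodf_seq_neq0; apply/allP => j _; rewrite nz. Qed.

Lemma one_subVXX_neq0 m j : (j < m)%N -> 1 - p ^- m * p ^+ j != 0.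
Proof.
move=> lt_jm; rewrite -(subnKC (ltnW lt_jm)) exprD invfM mulrAC mulVf ?expf_neq0 //.
by rewrite mul1r subr_eq0 eq_sym invr_eq1 p_not_root1 // subn_gt0.
Qed.

Definition watson_weight k :=
  qpoch p (p ^+ 2) k / (qpoch p p k ^+ 2 * qpoch (p ^+ 2) (p ^+ 2) k) * p ^+ k.

Definition watson_term N k :=
  qpoch (p ^- N) p k * qpoch (p ^+ N.+1) p k * watson_weight k.

Definition watson_sum N := \sum_(k < N.+1) watson_term N k.

Lemma watson_termS N k : watson_term N k.+1 = watson_term N k *
  ((1 - p ^- N * p ^+ k) * (1 - p ^+ N.+1 * p ^+ k) * (1 - p * (p ^+ 2) ^+ k) * p /
   ((1 - p * p ^+ k) ^+ 2 * (1 - p ^+ 2 * (p ^+ 2) ^+ k))).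
Proof.
have Qp_neq0 : qpoch p p k != 0.
  by apply: qpoch_neq0 => j _; rewrite -exprS one_subX_neq0.
have Qp2_neq0 : qpoch (p ^+ 2) (p ^+ 2) k != 0.
  by apply: qpoch_neq0 => j _; rewrite -exprM -exprD one_subX_neq0 // addn_gt0.
have pk1_neq0 : 1 - p * p ^+ k != 0 by rewrite -exprS one_subX_neq0.
have pk2_neq0 : 1 - (p * p ^+ k) ^+ 2 != 0 by rewrite -exprS -exprM one_subX_neq0.
rewrite /watson_term /watson_weight !qpochS -exprM mulnC exprM [p ^+ k.+1]exprS.
set x := p ^+ N; set y := p ^+ k.
by field; rewrite Qp_neq0 Qp2_neq0 pk1_neq0 pk2_neq0 expf_neq0.
Qed.

Lemma watson_term_eq0 N k : (N < k)%N -> watson_term N k = 0.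
Proof.
move=> lt_Nk; rewrite /watson_term /qpoch (bigD1 (Ordinal lt_Nk)) //=.
by rewrite mulVf ?expf_neq0 // subrr !mul0r.
Qed.

Lemma watson_sum_widen N m : (N < m)%N -> \sum_(k < m) watson_term N k = watson_sum N.
Proof.
move=> lt_Nm; rewrite /watson_sum (big_ord_widen m (watson_term N) lt_Nm) [RHS]big_mkcond.
by apply: eq_bigr => k _; case: ltnP => // le_Nk; rewrite watson_term_eq0.
Qed.

Lemma watson_term_shift2 N k :
  watson_term N k * ((1 - p ^- N.+2) * (1 - p ^- N.+2 * p) *
                     ((1 - p ^+ N.+1 * p ^+ k) * (1 - p ^+ N.+1 * p ^+ k.+1))) =
  watson_term N.+2 k * ((1 - p ^- N.+2 * p ^+ k) * (1 - p ^- N.+2 * p ^+ k.+1) *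
                        ((1 - p ^+ N.+1) * (1 - p ^+ N.+1 * p))).
Proof.
have := qpoch_shift2 (p ^- N.+2) p k.
have -> : p ^- N.+2 * p ^+ 2 = p ^- N by rewrite -addn2 exprD invfM mulfVK ?expf_neq0.
have := qpoch_shift2 (p ^+ N.+1) p k.
have -> : p ^+ N.+1 * p ^+ 2 = p ^+ N.+3 by rewrite -exprD addn2.
rewrite /watson_term.
set W := watson_weight k => shiftB shiftA.
transitivity (qpoch (p ^- N) p k * ((1 - p ^- N.+2) * (1 - p ^- N.+2 * p)) *
  (qpoch (p ^+ N.+1) p k * ((1 - p ^+ N.+1 * p ^+ k) * (1 - p ^+ N.+1 * p ^+ k.+1))) * W).
  by ring.
by rewrite shiftA -shiftB; ring.
Qed.

(* Zeilberger certificate of the recurrence [watson_sum_rec]; it vanishes at k = 0. *)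
Definition watson_cert N k :=
  p ^+ 2 * p ^+ N * (1 - p ^+ 3 * (p ^+ N) ^+ 2) * (p ^+ k - 1) ^+ 3 * (p ^+ k + 1) /
  (p ^+ k * (1 - p * p ^+ N * p ^+ k) * (1 - p ^+ 2 * p ^+ N * p ^+ k)).

Lemma watson_telescoping N k :
  (1 - p ^+ N.+2) ^+ 2 * watson_term N.+2 k - p * (1 - p ^+ N.+1) ^+ 2 * watson_term N k =
  watson_term N.+2 k.+1 * watson_cert N k.+1 - watson_term N.+2 k * watson_cert N k.
Proof.
pose d : K := (1 - p ^- N.+2) * (1 - p ^- N.+2 * p) *
          ((1 - p ^+ N.+1 * p ^+ k) * (1 - p ^+ N.+1 * p ^+ k.+1)).
have -> : watson_term N k = watson_term N.+2 k *
    ((1 - p ^- N.+2 * p ^+ k) * (1 - p ^- N.+2 * p ^+ k.+1) *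
     ((1 - p ^+ N.+1) * (1 - p ^+ N.+1 * p))) / d.
  rewrite -watson_term_shift2 mulfK // !mulf_neq0 //.
  - by have := @one_subVXX_neq0 N.+2 0 isT; rewrite expr0 mulr1.
  - by have := @one_subVXX_neq0 N.+2 1 isT; rewrite expr1.
  - by rewrite -exprD one_subX_neq0.
  - by rewrite -exprD one_subX_neq0.
rewrite watson_termS /watson_cert /d.
rewrite -exprM mulnC exprM !exprS ?expr0.
set x := p ^+ N; set y := p ^+ k; set f := watson_term N.+2 k.
(* Written as powers of p, every side condition reads p^m != 0 or p^m != 1 with m > 0. *)
field.
by rewrite /x /y -(expr1 p) -!exprM -!exprD !subr_eq0 ?(eq_sym 1) ?expf_neq0 ?p_not_root1.
Qed.

Lemma watson_sum_rec N :
  (1 - p ^+ N.+2) ^+ 2 * watson_sum N.+2 = p * (1 - p ^+ N.+1) ^+ 2 * watson_sum N.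
Proof.
have cert0 : watson_cert N 0 = 0.
  by rewrite /watson_cert expr0 subrr expr0n /= !(mulr0, mul0r).
have := telescope_sumr (fun k => watson_term N.+2 k * watson_cert N k) (leq0n N.+3).
rewrite big_mkord cert0 watson_term_eq0 // mul0r mulr0 subrr.
under eq_bigr do rewrite -watson_telescoping.
rewrite sumrB -!mulr_sumr !watson_sum_widen //; last by lia.
by move=> /eqP; rewrite subr_eq0 => /eqP.
Qed.

Definition watson_value N := if odd N then 0 else
  p ^+ N./2 * (qpoch p (p ^+ 2) N./2 ^+ 2 / qpoch (p ^+ 2) (p ^+ 2) N./2 ^+ 2).

Lemma watson_value_rec N :
  (1 - p ^+ N.+2) ^+ 2 * watson_value N.+2 = p * (1 - p ^+ N.+1) ^+ 2 * watson_value N.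
Proof.
rewrite /watson_value /= negbK; case: ifP => [_|evenN]; first by rewrite !mulr0.
have pN : p ^+ N = (p ^+ 2) ^+ N./2.
  by rewrite -exprM mul2n -{1}(odd_double_half N) evenN.
have Qp2_neq0 : qpoch (p ^+ 2) (p ^+ 2) N./2 != 0.
  by apply: qpoch_neq0 => j _; rewrite -exprM -exprD one_subX_neq0 // addn_gt0.
have pN2_neq0 : 1 - p ^+ 2 * p ^+ N != 0 by rewrite -exprD one_subX_neq0.
have -> : p ^+ N.+2 = p ^+ 2 * p ^+ N by rewrite -exprD.
rewrite !qpochS [p ^+ N./2.+1]exprS -pN [p ^+ N.+1]exprS.
by field; rewrite Qp2_neq0 pN2_neq0.
Qed.

Lemma watson_sumE N : watson_sum N = watson_value N.
Proof.
suff : watson_sum N = watson_value N /\ watson_sum N.+1 = watson_value N.+1 by case.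
elim: N => [|N [IH1 IH2]].
  have p1_neq0 : 1 - p != 0 by have := @one_subX_neq0 1 isT; rewrite expr1.
  have p2_neq0 : 1 - p ^+ 2 != 0 by rewrite one_subX_neq0.
  rewrite /watson_sum /watson_value /= !big_ord_recr !big_ord0 /= watson_termS.
  rewrite /watson_term /watson_weight /qpoch !big_ord0 !expr0 !expr1.
  by split; field; rewrite ?oner_neq0 ?p1_neq0 ?p2_neq0 ?p_neq0.
split=> //; apply: (mulfI (expf_neq0 2 (one_subX_neq0 (ltn0Sn N.+1)))).
by rewrite watson_sum_rec watson_value_rec IH1.
Qed.
End Watson.

Section CongruenceModP.
Variable P : {poly rat}.
Implicit Types (f g h : RF) (A B : {poly rat}).

Definition integral_mod f :=
  exists A B, [/\ B != 0, coprimep B P & f = A%:F / B%:F].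

Lemma integral_mod_poly A : integral_mod A%:F.
Proof. by exists A, 1; rewrite oner_eq0 coprime1p tofrac1 divr1. Qed.

Lemma integral_mod_inv B : B != 0 -> coprimep B P -> integral_mod (B%:F)^-1.
Proof. by move=> B_neq0 coBP; exists 1, B; rewrite tofrac1 div1r. Qed.

Lemma integral_mod1 : integral_mod 1.
Proof. by rewrite -tofrac1; apply: integral_mod_poly. Qed.

Lemma integral_modN f : integral_mod f -> integral_mod (- f).
Proof. by case=> A [B [? ? ->]]; exists (- A), B; rewrite tofracN mulNr. Qed.

Lemma integral_modD f g : integral_mod f -> integral_mod g -> integral_mod (f + g).
Proof.
case=> A1 [B1 [B1_neq0 coB1 ->]] [A2 [B2 [B2_neq0 coB2 ->]]].
exists (A1 * B2 + A2 * B1), (B1 * B2); rewrite mulf_neq0 // coprimepMl coB1 coB2.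
by split=> //; rewrite tofracD !tofracM addf_div ?tofrac_eq0.
Qed.

Lemma integral_modM f g : integral_mod f -> integral_mod g -> integral_mod (f * g).
Proof.
case=> A1 [B1 [B1_neq0 coB1 ->]] [A2 [B2 [B2_neq0 coB2 ->]]].
exists (A1 * A2), (B1 * B2); rewrite mulf_neq0 // coprimepMl coB1 coB2.
by split=> //; rewrite !tofracM mulf_div.
Qed.

Lemma integral_modX f m : integral_mod f -> integral_mod (f ^+ m).
Proof.
move=> intf; elim: m => [|m IH]; first by rewrite expr0; apply: integral_mod1.
by rewrite exprS; apply: integral_modM.
Qed.

Lemma integral_mod_prod (I : Type) (r : seq I) (F : I -> RF) :
  (forall i, integral_mod (F i)) -> integral_mod (\prod_(i <- r) F i).
Proof.
by move=> intF; apply: (big_ind integral_mod integral_mod1 integral_modM).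
Qed.

Lemma integral_mod_qpoch a b k :
  integral_mod a -> integral_mod b -> integral_mod (qpoch a b k).
Proof.
move=> inta intb; apply: integral_mod_prod => j.
exact: integral_modD integral_mod1 (integral_modN (integral_modM inta (integral_modX _ intb))).
Qed.

Lemma qcongE f g : qcong f g P = qcong (f - g) 0 P.
Proof. by rewrite /qcong subr0. Qed.

Lemma qcong_refl f : qcong f f P.
Proof. by exists 0, 1; rewrite oner_eq0 coprime1p dvdp0 subrr tofrac0 mul0r. Qed.

Lemma qcong_dvdp A : P %| A -> qcong A%:F 0 P.
Proof. by exists A, 1; rewrite oner_eq0 coprime1p tofrac1 divr1 subr0. Qed.

Lemma qcong_integral f g : qcong f g P -> integral_mod g -> integral_mod f.
Proof.
case=> A [B [B_neq0 coBP _ fg]] intg.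
by rewrite -(subrK g f) fg; apply: integral_modD => //; exists A, B.
Qed.

Lemma qcongD f1 g1 f2 g2 :
  qcong f1 g1 P -> qcong f2 g2 P -> qcong (f1 + f2) (g1 + g2) P.
Proof.
case=> A1 [B1 [B1_neq0 coB1 dvdA1 e1]] [A2 [B2 [B2_neq0 coB2 dvdA2 e2]]].
exists (A1 * B2 + A2 * B1), (B1 * B2); rewrite mulf_neq0 // coprimepMl coB1 coB2.
rewrite dvdp_add ?dvdp_mulr //; split=> //.
by rewrite opprD addrACA e1 e2 tofracD !tofracM addf_div ?tofrac_eq0.
Qed.

Lemma qcongMr f g h : qcong f g P -> integral_mod h -> qcong (f * h) (g * h) P.
Proof.
case=> A1 [B1 [B1_neq0 coB1 dvdA1 e1]] [A2 [B2 [B2_neq0 coB2 ->]]].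
exists (A1 * A2), (B1 * B2); rewrite mulf_neq0 // coprimepMl coB1 coB2 dvdp_mulr //.
by split=> //; rewrite -mulrBl e1 !tofracM mulf_div.
Qed.

Lemma qcong_sym f g : qcong f g P -> qcong g f P.
Proof.
case=> A [B [B_neq0 coBP dvdA e]]; exists (- A), B; rewrite dvdpNr.
by split=> //; rewrite tofracN mulNr -e opprB.
Qed.

Lemma qcong_trans f g h : qcong f g P -> qcong g h P -> qcong f h P.
Proof.
move=> fg gh; have := qcongD fg gh.
by rewrite qcongE [X in _ -> X]qcongE addrKA.
Qed.

Lemma qcongM f1 g1 f2 g2 : integral_mod f1 -> integral_mod f2 ->
  qcong f1 g1 P -> qcong f2 g2 P -> qcong (f1 * f2) (g1 * g2) P.
Proof.
move=> int1 int2 c1 c2; apply: qcong_trans (qcongMr c1 int2) _.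
rewrite ![g1 * _]mulrC; apply: qcongMr c2 _.
exact: qcong_integral (qcong_sym c1) int1.
Qed.

Lemma qcong_sum (I : Type) (r : seq I) (F G : I -> RF) :
  (forall i, qcong (F i) (G i) P) ->
  qcong (\sum_(i <- r) F i) (\sum_(i <- r) G i) P.
Proof.
by move=> FG; apply: (big_ind2 (fun x y => qcong x y P) (qcong_refl 0)) => // *; apply: qcongD.
Qed.

Lemma qcong_prod (I : Type) (r : seq I) (F G : I -> RF) :
  (forall i, integral_mod (F i) /\ qcong (F i) (G i) P) ->
  qcong (\prod_(i <- r) F i) (\prod_(i <- r) G i) P.
Proof.
move=> FG; apply: proj2 (big_ind2 (fun x y => integral_mod x /\ qcong x y P) _ _ _).
- by split; [apply: integral_mod1 | apply: qcong_refl].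
- by move=> x1 x2 y1 y2 [int1 c1] [int2 c2]; split; [apply: integral_modM | apply: qcongM].
- by move=> i _; apply: FG.
Qed.
End CongruenceModP.

Lemma PhiQ_dvd_one_subXn n : (0 < n)%N -> PhiQ n %| 1 - 'X^n.
Proof.
move=> n_gt0; have := prod_Cyclotomic n_gt0.
rewrite (big_rem n) /=; last by rewrite -dvdn_divisors.
move/(congr1 (map_poly (intr : int -> rat))).
rewrite rmorphM rmorphB rmorph1 /= map_polyXn -/(PhiQ n) => Xn1E.
by rewrite -opprB dvdpNr -Xn1E dvdp_mulr.
Qed.

Lemma coprimep_Xn_PhiQ n m : (0 < n)%N -> coprimep 'X^m (PhiQ n).
Proof.
move=> n_gt0; apply: coprimep_expl; rewrite coprimep_sym -['X]subr0 -polyC0.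
rewrite coprimep_XsubC; apply/negP => /(root_dvdp (PhiQ_dvd_one_subXn n_gt0)).
by rewrite /root !hornerE expr0n /= (negbTE (lt0n_neq0 n_gt0)) subr0 oner_eq0.
Qed.

(* Over algC, PhiQ n splits into the factors 'X - z^k with z^k a primitive
   n-th root of unity, none of which is a root of 1 - 'X^m when n does not divide m. *)
Lemma coprimep_one_subXn_PhiQ n m :
  (0 < n)%N -> ~~ (n %| m)%N -> coprimep (1 - 'X^m) (PhiQ n).
Proof.
move=> n_gt0 n_ndvd_m; have [z prim_z] := C_prim_root_exists n_gt0.
rewrite -(coprimep_map (@ratr algC)).
have -> : map_poly ratr (PhiQ n) = cyclotomic z n.
  rewrite -(Cintr_Cyclotomic prim_z) /PhiQ -map_poly_comp.
  by apply: eq_map_poly => a /=; rewrite ratr_int.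
rewrite rmorphB rmorph1 /= map_polyXn.
apply: (big_ind (coprimep (1 - 'X^m))); first exact: coprimep1.
  by move=> a b coa cob; rewrite coprimepMr coa cob.
move=> k cop_k; rewrite coprimep_XsubC /root !hornerE subr_eq0 eq_sym.
have prim_zk : n.-primitive_root (z ^+ k) by rewrite prim_root_exp_coprime.
by rewrite -(prim_order_dvd prim_zk).
Qed.

Lemma tofrac_Xn m : ('X^m : {poly rat})%:F = qq ^+ m.
Proof. by rewrite rmorphXn. Qed.

Lemma qq_neq0 : qq != 0.
Proof. by rewrite tofrac_eq0 polyX_eq0. Qed.

Lemma qqX_neq1 j : (0 < j)%N -> qq ^+ j != 1.
Proof.
move=> j_gt0; rewrite -tofrac_Xn -tofrac1 tofrac_eq.
apply/eqP => /(congr1 (fun r : {poly rat} => size r)); rewrite size_polyXn size_poly1 => -[j0].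
by rewrite j0 in j_gt0.
Qed.

Lemma qq2_not_root1 j : (0 < j)%N -> (qq ^+ 2) ^+ j != 1.
Proof. by move=> j_gt0; rewrite -exprM qqX_neq1 // muln_gt0. Qed.

Lemma summand_watsonE (K : fieldType) (q : K) k :
  qpoch q (q ^+ 2) k ^+ 2 * qpoch (q ^+ 2) (q ^+ 4) k /
    (qpoch (q ^+ 2) (q ^+ 2) k ^+ 2 * qpoch (q ^+ 4) (q ^+ 4) k) * q ^+ (2 * k) =
  qpoch q (q ^+ 2) k ^+ 2 * watson_weight (q ^+ 2) k.
Proof. by rewrite /watson_weight -exprM exprM !mulrA. Qed.

Lemma sqr_one_subXB (K : fieldType) (q x y : K) : x != 0 ->
  (1 - q * y) ^+ 2 - (1 - x^-1 * y) * (1 - q ^+ 2 * x * y) = (1 - q * x) ^+ 2 * (y / x).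
Proof. by move=> x_neq0; field. Qed.

Section PhiSquareModulus.
Variable n : nat.
Hypothesis n_gt0 : (0 < n)%N.
Local Notation P := (PhiQ n ^+ 2).

Lemma coprimep_PhiQ_sqr B : coprimep B (PhiQ n) -> coprimep B P.
Proof. by rewrite coprimep_pexpr. Qed.

Lemma integral_qqX m : integral_mod P (qq ^+ m).
Proof. by rewrite -tofrac_Xn; apply: integral_mod_poly. Qed.

Lemma integral_qqVX m : integral_mod P (qq ^- m).
Proof.
rewrite -tofrac_Xn; apply: integral_mod_inv; first by rewrite monic_neq0 ?monicXn.
by rewrite coprimep_PhiQ_sqr ?coprimep_Xn_PhiQ.
Qed.

Lemma integral_inv_one_subX m : ~~ (n %| m)%N -> integral_mod P (1 - qq ^+ m)^-1.
Proof.
move=> n_ndvd_m; have m_gt0 : (0 < m)%N by rewrite lt0n; apply: contraNneq n_ndvd_m => ->.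
rewrite -tofrac_Xn -tofrac1 -tofracB; apply: integral_mod_inv.
  by rewrite -tofrac_eq0 tofracB tofrac1 tofrac_Xn subr_eq0 eq_sym qqX_neq1.
by rewrite coprimep_PhiQ_sqr ?coprimep_one_subXn_PhiQ.
Qed.

Lemma integral_inv_qpoch m k :
  coprime n m -> (k < n)%N -> integral_mod P (qpoch (qq ^+ m) (qq ^+ m) k)^-1.
Proof.
move=> co_nm lt_kn; rewrite /qpoch -prodfV; apply: integral_mod_prod => j.
rewrite -exprS -exprM; apply: integral_inv_one_subX.
by rewrite Gauss_dvdr // gtnNdvd // (leq_ltn_trans (ltn_ord j) lt_kn).
Qed.

Lemma integral_watson_weight k :
  odd n -> (k < n)%N -> integral_mod P (watson_weight (qq ^+ 2) k).
Proof.
move=> odd_n lt_kn; have co_n2 : coprime n 2 by rewrite coprimen2.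
rewrite /watson_weight -!exprM invfM -exprVn.
apply: integral_modM; last exact: integral_qqX.
apply: integral_modM; first by apply: integral_mod_qpoch; apply: integral_qqX.
apply: integral_modM; first by apply: integral_modX; apply: integral_inv_qpoch.
by apply: integral_inv_qpoch; rewrite // coprimeMr co_n2.
Qed.

Lemma qcong_qpoch_sqr N k : n = N.*2.+1 ->
  qcong (qpoch qq (qq ^+ 2) k ^+ 2)
        (qpoch ((qq ^+ 2) ^- N) (qq ^+ 2) k * qpoch ((qq ^+ 2) ^+ N.+1) (qq ^+ 2) k) P.
Proof.
move=> n_eq; rewrite /qpoch -prodrXl -big_split; apply: qcong_prod => j.
split.
  apply: integral_modX; apply: integral_modD; first exact: integral_mod1.
  by apply: integral_modN; rewrite -exprM -exprS; apply: integral_qqX.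
rewrite /= qcongE.
have -> : (1 - qq * (qq ^+ 2) ^+ j) ^+ 2 -
    (1 - (qq ^+ 2) ^- N * (qq ^+ 2) ^+ j) * (1 - (qq ^+ 2) ^+ N.+1 * (qq ^+ 2) ^+ j) =
    ((1 - 'X^n) ^+ 2)%:F * ((qq ^+ 2) ^+ j * (qq ^+ 2) ^- N).
  have qqnE : qq ^+ n = qq * (qq ^+ 2) ^+ N by rewrite n_eq exprS -mul2n exprM.
  rewrite tofracXn tofracB tofrac1 tofrac_Xn qqnE [(qq ^+ 2) ^+ N.+1]exprS.
  by rewrite sqr_one_subXB ?expf_neq0 ?qq_neq0.
rewrite -(mul0r ((qq ^+ 2) ^+ j * (qq ^+ 2) ^- N)); apply: qcongMr.
  by apply: qcong_dvdp; rewrite dvdp_exp2r ?PhiQ_dvd_one_subXn.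
by rewrite -!exprM; apply: integral_modM; [apply: integral_qqX | apply: integral_qqVX].
Qed.

Lemma qcong_watson_value N : n = N.*2.+1 ->
  qcong (\sum_(k < n)
      (qpoch qq (qq ^+ 2) k ^+ 2 * qpoch (qq ^+ 2) (qq ^+ 4) k) /
      (qpoch (qq ^+ 2) (qq ^+ 2) k ^+ 2 * qpoch (qq ^+ 4) (qq ^+ 4) k)
      * qq ^+ (2 * k))
    (watson_value (qq ^+ 2) N) P.
Proof.
move=> n_eq; have qq2_neq0 : qq ^+ 2 != 0 by rewrite expf_neq0 ?qq_neq0.
rewrite -(watson_sumE qq2_neq0 qq2_not_root1) -(watson_sum_widen qq2_neq0 (m := n)).
  apply: qcong_sum => k; rewrite summand_watsonE /watson_term.
  apply: qcongMr; first exact: qcong_qpoch_sqr.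
  by apply: integral_watson_weight; rewrite ?n_eq /= ?odd_double.
by rewrite n_eq ltnS -addnn leq_addr.
Qed.

End PhiSquareModulus.

Theorem theorem2 (n : nat) (hn : (0 < n)%N) :
  let S := \sum_(k < n)
      (qpoch qq (qq ^+ 2) k ^+ 2 * qpoch (qq ^+ 2) (qq ^+ 4) k) /
      (qpoch (qq ^+ 2) (qq ^+ 2) k ^+ 2 * qpoch (qq ^+ 4) (qq ^+ 4) k)
      * qq ^+ (2 * k) in
  ((n %% 4 = 1)%N ->
     qcong S (qq ^+ ((n - 1) %/ 2) *
              (qpoch (qq ^+ 2) (qq ^+ 4) ((n - 1) %/ 4) ^+ 2 /
               qpoch (qq ^+ 4) (qq ^+ 4) ((n - 1) %/ 4) ^+ 2))
           (PhiQ n ^+ 2)) /\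
  ((n %% 4 = 3)%N -> qcong S 0 (PhiQ n ^+ 2)).
Proof.
move=> S; pose N := ((n - 1) %/ 2)%N.
split=> n_mod4; have /(qcong_watson_value hn) : n = N.*2.+1 by rewrite -mul2n /N; lia.
- have N_eq : N = ((n - 1) %/ 4).*2 by rewrite -mul2n /N; lia.
  rewrite /watson_value N_eq odd_double doubleK -!exprM.
  by have -> : (2 * ((n - 1) %/ 4) = (n - 1) %/ 2)%N by lia.
- have N_eq : N = ((n - 1) %/ 4).*2.+1 by rewrite -mul2n /N; lia.
  by rewrite /watson_value N_eq /= odd_double.
Qed.
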